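(* Let each directed channel of a fully connected network of $n$ processes be timely independently with the same probability $p<1$ (with $p>0$ fixed). In a multi-hop Omega implementation, a leader can exist only if some process has directed paths of timely channels to all other processes. Then the probability of leader existence in any multi-hop Omega implementation, i.e. the probability that there exists a process having a directed path of timely channels to every other process, approaches $1$ exponentially fast as $n\to\infty$.
   Context: A network has $n$ processes and a directed channel from every process to every other process. Each directed channel is timely with probability $p$, independently of all other channels. In a multi-hop implementation of the Omega failure detector, a message may reach its destination by being forwarded through intermediate processes, so a process can be the leader provided it has a timely directed path (a path all of whose channels are timely) to every other process. *)

From mathcomp Require Import all_boot all_order all_algebra.
Set Implicit Arguments. Unset Strict Implicit. Unset Printing Implicit Defensive.
Import Order.TTheory GRing.Theory Num.Theory.
Local Open Scope ring_scope.

(* A channel configuration on n processes: g (i, j) = true iff the directed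
   channel i -> j is timely.  Only off-diagonal entries are meaningful; valid
   configurations have no self-channel. *)
Definition config (n : nat) := {ffun 'I_n * 'I_n -> bool}.

Definition valid_config n (g : config n) : bool := [forall i : 'I_n, ~~ g (i, i)].

Definition cfg_weight (R : pzRingType) (p : R) n (g : config n) : R :=
  \prod_(ij : 'I_n * 'I_n | ij.1 != ij.2) (if g ij then p else 1 - p).

Definition timely_source n (g : config n) (i : 'I_n) : bool :=
  [forall j : 'I_n, (j != i) ==> connect (fun x y => g (x, y)) i j].

Definition leader_possible n (g : config n) : bool :=
  [exists i : 'I_n, timely_source g i].

Definition leader_prob (R : pzRingType) (p : R) (n : nat) : R :=
  \sum_(g : config n | valid_config g && leader_possible g) cfg_weight p g.

From mathcomp Require Import all_boot all_order all_algebra.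
From mathcomp Require Import ring lra.
Import Order.TTheory GRing.Theory Num.Theory.
Set Implicit Arguments. Unset Strict Implicit. Unset Printing Implicit Defensive.
Local Open Scope ring_scope.

(* If no process can lead, in particular process 0 cannot, so some process j
   is unreachable from 0; then none of the n - 2 two-hop paths 0 -> k -> j is
   timely.  These paths use pairwise disjoint channels, so by independence this
   has probability (1 - p^2)^(n-2), and a union bound over j gives
   1 - P(leader) <= (n - 1) (1 - p^2)^(n-2), which is O(q^n) for any
   q in (1 - p^2, 1). *)

Section BooleanProducts.
Variable R : comPzRingType.

Lemma prodr_natb (I : finType) (A : {set I}) (b : I -> bool) :
  \prod_(i in A) (b i)%:R = [forall i in A, b i]%:R :> R.
Proof.
case: (boolP [forall i in A, b i]) => [/forall_inP Ab | /forall_inPn[i Ai nbi]].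
  by apply: big1 => i /Ab ->.
by rewrite (bigD1 i) //= (negbTE nbi) mul0r.
Qed.

Lemma prodr_1D_powerset (I : finType) (A : {set I}) (F : I -> R) :
  \prod_(i in A) (1 + F i) = \sum_(J in powerset A) \prod_(i in J) F i.
Proof.
rewrite big_mkcond (eq_bigr (fun i => (if i \in A then F i else 0) + 1)); last first.
  by move=> i _; case: (i \in A); rewrite ?add0r // addrC.
rewrite bigA_distr [RHS]big_mkcond; apply: eq_bigr => J _.
rewrite powersetE; case: (boolP (J \subset A)) => [/subsetP JA | /subsetPn[i Ji nAi]].
  by rewrite [RHS]big_mkcond; apply: eq_bigr => i _; case: ifP => // /JA ->.
by rewrite (bigD1 i) //= Ji (negbTE nAi) mul0r.
Qed.

End BooleanProducts.

Section ProductWeight.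
Variables (R : comPzRingType) (I : finType) (w : I -> bool -> R).

Definition pweight (g : {ffun I -> bool}) : R := \prod_i w i (g i).

Lemma sum_pweight_prod (f : I -> bool -> R) :
  \sum_g pweight g * \prod_i f i (g i) = \prod_i \sum_b w i b * f i b.
Proof.
rewrite bigA_distr_bigA /=.
by apply: eq_bigr => g _; rewrite /pweight -big_split.
Qed.

Hypothesis w_sum1 : forall i, w i true + w i false = 1.

Lemma sum_pweight : \sum_g pweight g = 1.
Proof.
transitivity (\prod_i \sum_b w i b).
  by rewrite bigA_distr_bigA.
by apply: big1 => i _; rewrite big_bool; exact: w_sum1.
Qed.

Lemma sum_pweight_forall (S : {set I}) :
  \sum_g pweight g * [forall i in S, g i]%:R = \prod_(i in S) w i true.
Proof.
rewrite (eq_bigr (fun g => pweight g * \prod_i (if i \in S then (g i)%:R else 1))); last first.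
  by move=> g _; rewrite -big_mkcond prodr_natb.
rewrite (sum_pweight_prod (fun i b => if i \in S then b%:R else 1)).
rewrite [RHS]big_mkcond; apply: eq_bigr => i _; rewrite big_bool.
by case: ifP => _ /=; rewrite ?mulr1 ?mulr0 ?addr0 ?w_sum1.
Qed.

End ProductWeight.

Section Channels.
Variables (R : comPzRingType) (p : R).

(* Self-channels are absent with probability 1, so the product weight over
   all pairs vanishes on invalid configurations (see [pweight_chanE]). *)
Definition chan_weight {n} (ij : 'I_n * 'I_n) (b : bool) : R :=
  if ij.1 == ij.2 then (~~ b)%:R else if b then p else 1 - p.

Lemma chan_weight_sum1 {n} (ij : 'I_n * 'I_n) :
  chan_weight ij true + chan_weight ij false = 1.
Proof. by rewrite /chan_weight; case: ifP => _; rewrite ?add0r // addrC subrK. Qed.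

Lemma pweight_chanE n (g : config n) :
  pweight chan_weight g = if valid_config g then cfg_weight p g else 0.
Proof.
rewrite /pweight (bigID (fun ij : 'I_n * 'I_n => ij.1 != ij.2)) /= /cfg_weight.
rewrite (eq_bigr (fun ij => if g ij then p else 1 - p)); last first.
  by move=> ij /negbTE; rewrite /chan_weight => ->.
case: (boolP (valid_config g)) => [/forallP gii | /forallPn[i]]; last first.
  rewrite negbK => gii; rewrite [X in _ * X = _](bigD1 (i, i)) ?negbK //=.
  by rewrite /chan_weight eqxx gii mul0r mulr0.
rewrite [X in _ * X = _]big1 ?mulr1 // => -[i k]; rewrite negbK => /eqP /= <-.
by rewrite /chan_weight eqxx (negbTE (gii i)).
Qed.

Lemma leader_failureE n :
  1 - leader_prob p n =
    \sum_(g : config n) pweight chan_weight g * (~~ leader_possible g)%:R.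
Proof.
have -> : leader_prob p n = \sum_(g : config n | leader_possible g) pweight chan_weight g.
  rewrite /leader_prob (eq_bigl (fun g => leader_possible g && valid_config g)).
    by rewrite big_mkcondr; apply: eq_bigr => g _; rewrite pweight_chanE.
  by move=> g; rewrite andbC.
rewrite -{1}(sum_pweight (@chan_weight_sum1 n)) (bigID (@leader_possible n)) /=.
rewrite addrAC subrr add0r.
by rewrite big_mkcond; apply: eq_bigr => g _; case: leader_possible; rewrite ?mulr0 ?mulr1.
Qed.

End Channels.

Lemma pweight_chan_ge0 (R : numDomainType) (p : R) n (g : config n) :
  0 <= p <= 1 -> 0 <= pweight (chan_weight p) g.
Proof.
case/andP=> p0 p1; apply: prodr_ge0 => ij _; rewrite /chan_weight.
by case: ifP => _; case: (g ij); rewrite ?subr_ge0.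
Qed.

Section TwoHop.
Variables (n : nat) (z j : 'I_n).

Definition two_hop_free (g : config n) : bool :=
  [forall k in ~: [set z; j], ~~ (g (z, k) && g (k, j))].

Definition two_hop_channels (J : {set 'I_n}) : {set 'I_n * 'I_n} :=
  [set (z, k) | k in J] :|: [set (k, j) | k in J].

Lemma prod_two_hop_channels (R : comPzRingType) (J : {set 'I_n})
    (F : 'I_n * 'I_n -> R) :
  z \notin J ->
  \prod_(ij in two_hop_channels J) F ij = \prod_(k in J) (F (z, k) * F (k, j)).
Proof.
move=> zJ.
rewrite (eq_bigl [predU [set (z, k) | k in J] & [set (k, j) | k in J]]) => [|ij]; last first.
  by rewrite !inE.
rewrite bigU; last first.
  rewrite disjoint_subset; apply/subsetP => _ /imsetP[k _ ->]; rewrite inE.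
  apply/negP => /imsetP[k' Jk' [ez _]].
  by move: zJ; rewrite ez Jk'.
by rewrite !big_imset ?big_split //= => k k' _ _ [].
Qed.

Lemma two_hop_freeE (R : comPzRingType) (g : config n) :
  (two_hop_free g)%:R = \sum_(J in powerset (~: [set z; j]))
      (-1) ^+ #|J| * \prod_(k in J) ((g (z, k))%:R * (g (k, j))%:R) :> R.
Proof.
rewrite -prodr_natb.
rewrite (eq_bigr (fun k => 1 + - ((g (z, k))%:R * (g (k, j))%:R))); last first.
  by move=> k _; case: (g (z, k)); case: (g (k, j));
    rewrite ?mulr0 ?mul0r ?subr0 ?mulr1 ?subrr.
by rewrite prodr_1D_powerset; apply: eq_bigr => J _; rewrite prodrN.
Qed.

Lemma sum_chan_two_hop (R : comPzRingType) (p : R) (J : {set 'I_n}) :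
  J \subset ~: [set z; j] ->
  \sum_(g : config n)
      pweight (chan_weight p) g * \prod_(k in J) ((g (z, k))%:R * (g (k, j))%:R)
    = (p ^+ 2) ^+ #|J|.
Proof.
move=> /subsetP J_relays.
have zJ : z \notin J by apply/negP => /J_relays; rewrite !inE eqxx.
rewrite (eq_bigr (fun g => pweight (chan_weight p) g *
    [forall ij in two_hop_channels J, g ij]%:R)); last first.
  by move=> g _; rewrite -prodr_natb prod_two_hop_channels.
rewrite (sum_pweight_forall (chan_weight_sum1 p)).
rewrite (prod_two_hop_channels (fun ij => chan_weight p ij true)) // -prodr_const.
apply: eq_bigr => k /J_relays; rewrite !inE negb_or => /andP[kz kj].
by rewrite /chan_weight /= eq_sym (negbTE kz) (negbTE kj) expr2.
Qed.

Lemma sum_chan_two_hop_free (R : comPzRingType) (p : R) :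
  z != j ->
  \sum_(g : config n) pweight (chan_weight p) g * (two_hop_free g)%:R
    = (1 - p ^+ 2) ^+ (n - 2).
Proof.
move=> zj.
under eq_bigr => g _ do rewrite two_hop_freeE mulr_sumr.
rewrite exchange_big /=.
transitivity (\sum_(J in powerset (~: [set z; j])) \prod_(k in J) - p ^+ 2).
  apply: eq_bigr => J; rewrite powersetE => J_relays.
  under eq_bigr => g _ do rewrite mulrCA.
  by rewrite -mulr_sumr sum_chan_two_hop // prodrN prodr_const.
rewrite -prodr_1D_powerset prodr_const.
congr (_ ^+ _); have := cardsC [set z; j]; rewrite cards2 zj card_ord.
by move=> /(congr1 (subn^~ 2)); rewrite addKn.
Qed.

End TwoHop.

Lemma not_leader_two_hop_free n (z : 'I_n) (g : config n) :
  ~~ leader_possible g -> exists2 j, j != z & two_hop_free z j g.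
Proof.
move/existsPn/(_ z)/forallPn => [j]; rewrite negb_imply => /andP[jz no_path].
exists j => //; apply/forall_inP => k _; apply/negP => /andP[gzk gkj].
by move/negP: no_path; apply; exact: connect_trans (connect1 gzk) (connect1 gkj).
Qed.

Lemma leader_failure_le (R : numDomainType) (p : R) n :
  0 <= p <= 1 -> 1 - leader_prob p n.+1 <= n%:R * (1 - p ^+ 2) ^+ n.-1.
Proof.
move=> p01; rewrite leader_failureE.
apply: (@le_trans _ _ (\sum_(j | j != ord0) \sum_(g : config n.+1)
    pweight (chan_weight p) g * (two_hop_free ord0 j g)%:R)).
  rewrite exchange_big /=; apply: ler_sum => g _; rewrite -mulr_sumr.
  apply: ler_wpM2l; first exact: pweight_chan_ge0.
  case: (boolP (leader_possible g)) => [_ | /(not_leader_two_hop_free ord0)[j jz free_j]].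
    by apply: sumr_ge0 => j _; rewrite ler0n.
  by rewrite (bigD1 j) //= free_j lerDl sumr_ge0 // => i _; rewrite ler0n.
rewrite (eq_bigr (fun=> (1 - p ^+ 2) ^+ n.-1)); last first.
  by move=> j jz; rewrite sum_chan_two_hop_free 1?eq_sym // subSS subn1.
by rewrite sumr_const cardC1 card_ord mulr_natl.
Qed.

Lemma natr_mul_expr_le (R : realFieldType) (r q : R) n :
  0 <= r < q -> n%:R * r ^+ n.-1 <= q ^+ n / (q - r).
Proof.
case/andP=> r0 rq; have q0 : 0 <= q := le_trans r0 (ltW rq).
rewrite ler_pdivlMr ?subr_gt0 //.
apply: (@le_trans _ _ (q ^+ n - r ^+ n)); last by rewrite gerDl oppr_le0 exprn_ge0.
rewrite subrXX [leLHS]mulrC ler_pM2l ?subr_gt0 // mulr_natl -[n in _ *+ n]card_ord -sumr_const.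
apply: ler_sum => i _.
have le_i : (i <= n.-1)%N by rewrite -ltnS (ltn_predK (ltn_ord i)).
by rewrite -{1}(subnK le_i) exprD ler_wpM2r ?exprn_ge0 // lerXn2r ?nnegrE // ltW.
Qed.

Lemma leader_prob_ge0 (R : numDomainType) (p : R) n :
  0 <= p <= 1 -> 0 <= leader_prob p n.
Proof.
case/andP=> p0 p1; apply: sumr_ge0 => g _; apply: prodr_ge0 => ij _.
by case: (g ij); rewrite ?subr_ge0.
Qed.

Theorem theorem2 (R : realFieldType) (p : R) (hp0 : 0 < p) (hp1 : p < 1) :
  exists (C q : R), 0 < C /\ 0 < q /\ q < 1 /\
    forall n : nat, 1 - leader_prob p n <= C * q ^+ n.
Proof.
have p01 : 0 <= p <= 1 by rewrite !ltW.
have p2_gt0 : 0 < p ^+ 2 by rewrite exprn_gt0.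
have p2_lt1 : p ^+ 2 < 1 by rewrite expr2; nra.
set r := 1 - p ^+ 2; have r0 : 0 <= r by rewrite /r; lra.
set q := (1 + r) / 2; have rq : r < q by rewrite /q /r; lra.
have q1 : q < 1 by rewrite /q /r; lra.
have qr_q_gt0 : 0 < (q - r) * q by apply: mulr_gt0; lra.
exists ((q - r) * q)^-1, q; split; first by rewrite invr_gt0.
split; first lra. split; first lra.
case=> [|n].
  have : (q - r) * q <= 1 by rewrite -[1]mulr1; apply: ler_pM; lra.
  rewrite -invf_ge1 // expr0 mulr1; have := leader_prob_ge0 0 p01; lra.
suff -> : ((q - r) * q)^-1 * q ^+ n.+1 = q ^+ n / (q - r).
  apply: le_trans (leader_failure_le n p01) (natr_mul_expr_le n _).
  by rewrite r0 rq.
rewrite exprS; field.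
by apply/andP; split; apply: lt0r_neq0; lra.
Qed.
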